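(* Let $P$ be a program, $G$ a p-goal and $S$ a scheduling rule. Suppose every infinite p-SLD derivation of $G$ in $P$ via $S$ is pruned by p-$EVR_L$. Then there is a finite bound $l$ such that every resolvent $R$ occurring in any p-SLD derivation of $G$ in $P$ via $S$ satisfies $\#R\le l$.
   Context: A p-atom is a pair $a[p]$ of an atom $a$ and a rational priority $p$. A p-goal is a finite set of p-atoms with pairwise distinct priorities, regarded as a list ordered by increasing priority; $\#G$ is its number of p-atoms. Substitutions act on atoms and leave priorities unchanged. A clause is $h\leftarrow B$ with $h$ an atom and $B$ a p-goal; a program is a finite set of clauses. For p-goals with no common priority, $F+G=F\cup G$; $F|G$ denotes $F+G$ when all priorities of $F$ are smaller than those of $G$. A shifting $\underline{\pi}$ is a strictly increasing bijection $\mathbb{Q}\to\mathbb{Q}$ acting on priorities. Priority derivation step: for a p-goal $a|F$ ($a$ of least priority), clause $c=(h\leftarrow B)$, renaming $\xi$ with $var(a|F)\cap var(c\xi)=\emptyset$, idempotent relevant mgu $\theta$ of $a$ and $h\xi$, shifting $\underline{\pi}$ with $F$, $B\xi\underline{\pi}$ sharing no priority: $a|F\xrightarrow{c\xi,\theta}(F+B\xi\underline{\pi})\theta$. A p-SLD derivation of $G_0$ in $P$ is a finite or infinite sequence $G_0\xrightarrow{c_0\xi_0,\theta_0}G_1\xrightarrow{c_1\xi_1,\theta_1}\cdots$ of such steps with $c_j\in P$ and each $c_j\xi_j$ variable-disjoint from $G_0$ and all earlier renamed clauses; it is via $S$ if all its steps belong to $S$. Lowering: for $c=(h\leftarrow B)$,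 a step $a\lambda\underline{\sigma}|(K\lambda\underline{\sigma}+X)\xrightarrow{c}(X+K\lambda\underline{\sigma}+B\xi''\underline{\theta}'')\alpha''$ is a lowering by $X$ of $a|K\xrightarrow{c}(K+B\xi'\underline{\theta}')\alpha'$; a congruent lowering if some shifting $\underline{\rho}$ has $K\underline{\rho}=K\underline{\sigma}$ and $B\underline{\theta}'\underline{\rho}=B\underline{\theta}''$. Steps are (congruent) lowerings of each other if each is a (congruent) lowering of the other. A set $S$ of steps is deterministic if any two steps of $S$ that are lowerings of each other are congruent lowerings of each other; complete if (i) whenever some step $G\xrightarrow{c}\cdot$ exists, some step $G\xrightarrow{c}\cdot$ lies in $S$, and (ii) $S$ contains every step that is a congruent lowering of each other with a step of $S$. A scheduling rule is a complete deterministic set of priority derivation steps. p-$EVR_L$ check: a derivation $G_0\xrightarrow{\theta_0}G_1\xrightarrow{\theta_1}\cdots$ is pruned by p-$EVR_L$ if there exist $0\le i<j$, a renaming $\tau$ and a shifting $\underline{\tau}$ with $G_0\theta_0\cdots\theta_{j-1}=G_0\theta_0\cdots\theta_{i-1}\tau$ and $G_j=G_i\tau\underline{\tau}$. *)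

From mathcomp Require Import all_boot all_order all_algebra.
From Stdlib Require List.
Set Implicit Arguments. Unset Strict Implicit. Unset Printing Implicit Defensive.
Import Order.TTheory GRing.Theory Num.Theory.
Local Open Scope ring_scope.

Inductive term : Type :=
| Var : nat -> term
| Fn  : nat -> seq term -> term.

Inductive atom : Type := Atom : nat -> seq term -> atom.

Definition subst := nat -> term.

Fixpoint tsubst (s : subst) (t : term) : term :=
  match t with
  | Var x => s x
  | Fn f ts => Fn f (map (tsubst s) ts)
  end.

Definition asubst (s : subst) (a : atom) : atom :=
  let: Atom p ts := a in Atom p (map (tsubst s) ts).

Fixpoint tvars (t : term) : seq nat :=
  match t with
  | Var x => [:: x]
  | Fn _ ts => flatten (map tvars ts)
  end.

Definition avars (a : atom) : seq nat :=
  let: Atom _ ts := a in flatten (map tvars ts).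

Definition renaming (xi : subst) : Prop :=
  exists r : nat -> nat, bijective r /\ forall x, xi x = Var (r x).

Definition idempotent (th : subst) : Prop :=
  forall x, tsubst th (th x) = th x.

Definition unifier (th : subst) (a b : atom) : Prop :=
  asubst th a = asubst th b.

Definition mgu (th : subst) (a b : atom) : Prop :=
  unifier th a b /\
  forall s, unifier s a b -> exists eta : subst, forall x, s x = tsubst eta (th x).

(* vars(theta) = dom(theta) U range(theta) *)
Definition subst_vars (th : subst) (v : nat) : Prop :=
  th v <> Var v \/ exists x, th x <> Var x /\ v \in tvars (th x).

Definition relevant (th : subst) (a b : atom) : Prop :=
  forall v, subst_vars th v -> v \in avars a \/ v \in avars b.

Definition patom := (atom * rat)%type.

(* A p-goal is represented by the list of its p-atoms ordered by strictly
   increasing priority (canonical representation of the finite set). *)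
Definition pgoal := seq patom.

Definition prio_lt (x y : patom) : bool := x.2 < y.2.
Definition prio_le (x y : patom) : bool := x.2 <= y.2.

Definition pgoal_wf (G : pgoal) : Prop := sorted prio_lt G.

Definition prios (G : pgoal) : seq rat := map snd G.

Definition no_common_prio (F G : pgoal) : Prop :=
  forall q, q \in prios F -> q \notin prios G.

(* F + G (meaningful when F and G share no priority) *)
Definition padd (F G : pgoal) : pgoal := sort prio_le (F ++ G).

Definition psubst (s : subst) (G : pgoal) : pgoal :=
  map (fun x => (asubst s x.1, x.2)) G.

Definition pvars (G : pgoal) : seq nat := flatten (map (fun x => avars x.1) G).

Definition shifting (pi : rat -> rat) : Prop :=
  bijective pi /\ forall x y : rat, x < y -> pi x < pi y.

Definition pshift (pi : rat -> rat) (G : pgoal) : pgoal :=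
  map (fun x => (x.1, pi x.2)) G.

Record clause := Clause { head : atom ; body : pgoal }.

Definition csubst (s : subst) (c : clause) : clause :=
  Clause (asubst s (head c)) (psubst s (body c)).

Definition cvars (c : clause) : seq nat := avars (head c) ++ pvars (body c).

Definition program := seq clause.

Definition program_wf (P : program) : Prop :=
  forall c, List.In c P -> pgoal_wf (body c).

Definition disjoint_vars (u v : seq nat) : Prop :=
  forall x, x \in u -> x \notin v.

(* A step  a|F --c xi, theta--> (F + B xi pi) theta  records its source,
   the (unrenamed) clause c, the renaming xi, the mgu theta, the shifting pi
   and its target. *)
Record step := Step {
  st_src : pgoal ;
  st_cl  : clause ;
  st_ren : subst ;
  st_mgu : subst ;
  st_sh  : rat -> rat ;
  st_tgt : pgoal }.

Definition is_step (s : step) : Prop :=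
  exists (a : atom) (p : rat) (F : pgoal),
    st_src s = (a, p) :: F /\
    pgoal_wf (st_src s) /\
    pgoal_wf (body (st_cl s)) /\
    renaming (st_ren s) /\
    disjoint_vars (pvars (st_src s)) (cvars (csubst (st_ren s) (st_cl s))) /\
    idempotent (st_mgu s) /\
    relevant (st_mgu s) a (asubst (st_ren s) (head (st_cl s))) /\
    mgu (st_mgu s) a (asubst (st_ren s) (head (st_cl s))) /\
    shifting (st_sh s) /\
    no_common_prio F (pshift (st_sh s) (psubst (st_ren s) (body (st_cl s)))) /\
    st_tgt s = psubst (st_mgu s)
                 (padd F (pshift (st_sh s) (psubst (st_ren s) (body (st_cl s))))).

(* [lowering_w s2 s1 lam sig X a p K] : with s1 = a|K --c--> ..., the step s2
   has source  a lam sig | (K lam sig + X)  and uses the same clause c. *)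
Definition lowering_w (s2 s1 : step) (lam : subst) (sig : rat -> rat)
    (X : pgoal) (a : atom) (p : rat) (K : pgoal) : Prop :=
  is_step s1 /\ is_step s2 /\ st_cl s2 = st_cl s1 /\
  st_src s1 = (a, p) :: K /\
  shifting sig /\
  no_common_prio (pshift sig (psubst lam K)) X /\
  st_src s2 = (asubst lam a, sig p) :: padd (pshift sig (psubst lam K)) X.

Definition lowering (s2 s1 : step) : Prop :=
  exists lam sig X a p K, lowering_w s2 s1 lam sig X a p K.

Definition congruent_lowering (s2 s1 : step) : Prop :=
  exists lam sig X a p K, lowering_w s2 s1 lam sig X a p K /\
    exists rho, shifting rho /\
      pshift rho K = pshift sig K /\
      pshift rho (pshift (st_sh s1) (body (st_cl s1)))
        = pshift (st_sh s2) (body (st_cl s2)).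

Definition lowerings_each_other (s1 s2 : step) : Prop :=
  lowering s1 s2 /\ lowering s2 s1.

Definition congruent_lowerings_each_other (s1 s2 : step) : Prop :=
  congruent_lowering s1 s2 /\ congruent_lowering s2 s1.

Definition step_set := step -> Prop.

Definition deterministic (S : step_set) : Prop :=
  forall s1 s2, S s1 -> S s2 -> lowerings_each_other s1 s2 ->
    congruent_lowerings_each_other s1 s2.

Definition complete (S : step_set) : Prop :=
  (forall (G : pgoal) (c : clause),
      (exists s, is_step s /\ st_src s = G /\ st_cl s = c) ->
      exists s, S s /\ st_src s = G /\ st_cl s = c) /\
  (forall s s', S s -> is_step s' -> congruent_lowerings_each_other s s' -> S s').

Definition scheduling_rule (S : step_set) : Prop :=
  (forall s, S s -> is_step s) /\ complete S /\ deterministic S.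

(* A derivation of G0 is given by its steps f 0, f 1, ... and its length
   n : option nat (Some m = m steps, None = infinite). *)
Definition in_len (n : option nat) (j : nat) : bool :=
  if n is Some m then (j < m)%N else true.

Definition resolvent (G0 : pgoal) (f : nat -> step) (j : nat) : pgoal :=
  if j is j'.+1 then st_tgt (f j') else G0.

(* resolvent index j (0 <= j <= length) *)
Definition in_res (n : option nat) (j : nat) : bool :=
  if n is Some m then (j <= m)%N else true.

Definition pSLD_derivation (P : program) (S : step_set) (G0 : pgoal)
    (f : nat -> step) (n : option nat) : Prop :=
  forall j, in_len n j ->
    S (f j) /\
    List.In (st_cl (f j)) P /\
    st_src (f j) = resolvent G0 f j /\
    disjoint_vars (pvars G0) (cvars (csubst (st_ren (f j)) (st_cl (f j)))) /\
    (forall k, (k < j)%N ->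
       disjoint_vars (cvars (csubst (st_ren (f k)) (st_cl (f k))))
                     (cvars (csubst (st_ren (f j)) (st_cl (f j))))).

(* G0 theta_0 ... theta_(j-1) *)
Fixpoint inst (G0 : pgoal) (f : nat -> step) (j : nat) : pgoal :=
  if j is j'.+1 then psubst (st_mgu (f j')) (inst G0 f j') else G0.

Definition pruned_by_pEVRL (G0 : pgoal) (f : nat -> step) (n : option nat) : Prop :=
  exists i j (tau : subst) (tau' : rat -> rat),
    (i < j)%N /\ in_res n j /\ renaming tau /\ shifting tau' /\
    inst G0 f j = psubst tau (inst G0 f i) /\
    resolvent G0 f j = pshift tau' (psubst tau (resolvent G0 f i)).

(* A resolvent grows by at most the largest body size in [P] per step, so it
   suffices to bound the length of the relevant derivations.

   Scheduling rules are closed under variants (renaming variables and shifting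
   priorities): this follows from determinism and completeness, together with
   the uniqueness of relevant idempotent mgus up to renaming. Consequently two
   derivations via [S] using the same clauses have variant resolvents, and a
   derivation can be continued from a variant of any of its resolvents. If a
   derivation is pruned at [i < j], everything after [G_j] can thus be replayed
   after [G_i] with resolvents of the same sizes, so by strong induction on the
   length only unpruned derivations need to be bounded. Their length is bounded
   by König's lemma: otherwise, [P] being finite, clauses can be chosen one at a
   time so that every prefix still begins arbitrarily long unpruned
   derivations; this yields an infinite derivation, which by hypothesis is
   pruned at some finite [j], and the pruning transfers to an unpruned
   derivation with the same first [j] clauses. *)

From HB Require Import structures.
From Pilot Require Import Defs.
From mathcomp Require Import all_boot all_order all_algebra.
From Stdlib Require Import Classical ClassicalEpsilon FunctionalExtensionality.
Set Implicit Arguments. Unset Strict Implicit. Unset Printing Implicit Defensive.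
Import Order.TTheory.

(** * Terms, atoms and substitutions *)

(* Equality of terms is only reasoned about, never computed, so it may be
   decided classically. *)
Definition term_eqb (t u : term) : bool :=
  if excluded_middle_informative (t = u) then true else false.
Lemma term_eqP : Equality.axiom term_eqb.
Proof. by move=> t u; rewrite /term_eqb; case: excluded_middle_informative; constructor. Qed.
HB.instance Definition _ := hasDecEq.Build term term_eqP.

Lemma mem_In (T : eqType) (x : T) (s : seq T) : x \in s -> List.In x s.
Proof. by elim: s => //= y s IH; rewrite inE => /orP [/eqP->|/IH]; [left|right]. Qed.

Section TermInd.
Variable Pt : term -> Prop.
Hypothesis Pt_Var : forall x, Pt (Var x).
Hypothesis Pt_Fn : forall f ts, List.Forall Pt ts -> Pt (Fn f ts).

Fixpoint term_ind_Forall (t : term) : Pt t :=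
  match t with
  | Var x => Pt_Var x
  | Fn f ts => Pt_Fn f ((fix go ts := match ts return List.Forall Pt ts with
                      | [::] => List.Forall_nil _
                      | t :: ts => List.Forall_cons _ (term_ind_Forall t) (go ts) end) ts)
  end.
End TermInd.

Lemma term_ind_mem (Pt : term -> Prop) :
  (forall x, Pt (Var x)) -> (forall f ts, {in ts, forall t, Pt t} -> Pt (Fn f ts)) ->
  forall t, Pt t.
Proof.
move=> HV HF; elim/term_ind_Forall => // f ts /List.Forall_forall H.
by apply: HF => t /mem_In; apply: H.
Qed.

Definition ren (r : nat -> nat) : subst := fun x => Var (r x).

Lemma tsubst_comp s u t : tsubst s (tsubst u t) = tsubst (fun x => tsubst s (u x)) t.
Proof.
elim/term_ind_mem: t => //= f ts IH; congr Fn; rewrite -map_comp; exact/eq_in_map.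
Qed.

Lemma tsubst_Var t : tsubst Var t = t.
Proof.
elim/term_ind_mem: t => //= f ts IH; congr Fn; rewrite -[RHS]map_id; exact/eq_in_map.
Qed.

Lemma eq_tsubst s s' t :
  {in tvars t, s =1 s'} -> tsubst s t = tsubst s' t.
Proof.
elim/term_ind_mem: t => [x /= H|f ts IH H /=]; first by apply: H; rewrite inE.
congr Fn; apply/eq_in_map => u Hu; apply: IH => // x Hx; apply: H.
by apply/flatten_mapP; exists u.
Qed.

Lemma tvars_tsubst s t v :
  v \in tvars (tsubst s t) <-> exists x, x \in tvars t /\ v \in tvars (s x).
Proof.
elim/term_ind_mem: t => [x|f ts IH] /=.
  by split=> [H|[y [Hy H]]]; [exists x; rewrite inE|move: Hy; rewrite inE => /eqP<-].
rewrite -map_comp; split.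
- case/flatten_mapP=> u Hu /(IH u Hu) [x [Hx Hv]].
  by exists x; split=> //; apply/flatten_mapP; exists u.
- case=> x [/flatten_mapP [u Hu Hx] Hv]; apply/flatten_mapP; exists u => //=.
  by apply/(IH u Hu); exists x.
Qed.

Lemma tsubst_fixed_vars s t : tsubst s t = t -> {in tvars t, forall v, s v = Var v}.
Proof.
elim/term_ind_mem: t => [x /= H v|f ts IH /= [E] v]; first by rewrite inE => /eqP->.
case/flatten_mapP=> u Hu; apply: IH => //.
by move: E; rewrite -[in RHS](map_id ts) => /eq_in_map /(_ u Hu).
Qed.

Lemma tvars_ren r t : tvars (tsubst (ren r) t) = map r (tvars t).
Proof.
elim/term_ind_mem: t => //= f ts IH; rewrite map_flatten -!map_comp; congr flatten.
exact/eq_in_map.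
Qed.

Definition term_of_atom (a : atom) : term := let: Atom p ts := a in Fn p ts.
Lemma term_of_atom_inj : injective term_of_atom. Proof. by case=> p ts [q us] /= [-> ->]. Qed.
HB.instance Definition _ := Equality.copy atom (inj_type term_of_atom_inj).

Lemma term_of_atom_subst s a : term_of_atom (asubst s a) = tsubst s (term_of_atom a).
Proof. by case: a. Qed.
Lemma avarsE a : avars a = tvars (term_of_atom a). Proof. by case: a. Qed.

Lemma asubst_comp s u a : asubst s (asubst u a) = asubst (fun x => tsubst s (u x)) a.
Proof. by apply: term_of_atom_inj; rewrite !term_of_atom_subst tsubst_comp. Qed.
Lemma asubst_Var a : asubst Var a = a.
Proof. by apply: term_of_atom_inj; rewrite !term_of_atom_subst tsubst_Var. Qed.
Lemma eq_asubst s s' a : {in avars a, s =1 s'} -> asubst s a = asubst s' a.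
Proof.
by rewrite avarsE => H; apply: term_of_atom_inj; rewrite !term_of_atom_subst; apply: eq_tsubst.
Qed.
Lemma avars_asubst s a v :
  v \in avars (asubst s a) <-> exists x, x \in avars a /\ v \in tvars (s x).
Proof. by rewrite !avarsE term_of_atom_subst tvars_tsubst. Qed.
Lemma avars_ren r a : avars (asubst (ren r) a) = map r (avars a).
Proof. by rewrite !avarsE term_of_atom_subst tvars_ren. Qed.

(** * p-goals and shiftings *)

Lemma pvars_has G v : (v \in pvars G) = has (fun x => v \in avars x.1) G.
Proof. by elim: G => //= x G IH; rewrite mem_cat IH. Qed.

Lemma has_sort T (p : pred T) le s : has p (sort le s) = has p s.
Proof. by apply/negb_inj; rewrite -!all_predC all_sort. Qed.

Lemma pvars_padd F Y v : (v \in pvars (padd F Y)) = (v \in pvars F) || (v \in pvars Y).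
Proof. by rewrite !pvars_has /padd has_sort has_cat. Qed.

Lemma size_padd F Y : size (padd F Y) = (size F + size Y)%N.
Proof. by rewrite /padd size_sort size_cat. Qed.

Lemma psubst_comp s u G : psubst s (psubst u G) = psubst (fun x => tsubst s (u x)) G.
Proof. by rewrite /psubst -map_comp; apply: eq_map => x /=; rewrite asubst_comp. Qed.
Lemma psubst_Var G : psubst Var G = G.
Proof. by rewrite /psubst -[RHS]map_id; apply: eq_map => -[a p] /=; rewrite asubst_Var. Qed.
Lemma pshift_comp f g G : pshift f (pshift g G) = pshift (f \o g) G.
Proof. by rewrite /pshift -map_comp. Qed.
Lemma pshift_id G : pshift id G = G.
Proof. by rewrite /pshift -[RHS]map_id; apply: eq_map => -[a p]. Qed.
Lemma pshift_psubst f s G : pshift f (psubst s G) = psubst s (pshift f G).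
Proof. by rewrite /psubst /pshift -!map_comp. Qed.
Lemma prios_pshift f G : prios (pshift f G) = map f (prios G).
Proof. by rewrite /prios /pshift -!map_comp. Qed.
Lemma prios_psubst s G : prios (psubst s G) = prios G.
Proof. by rewrite /prios /psubst -!map_comp. Qed.
Lemma pvars_pshift f G : pvars (pshift f G) = pvars G.
Proof. by rewrite /pvars /pshift -!map_comp. Qed.
Lemma size_pshift f G : size (pshift f G) = size G. Proof. exact: size_map. Qed.
Lemma size_psubst f G : size (psubst f G) = size G. Proof. exact: size_map. Qed.

Lemma eq_pshift f g G : {in prios G, f =1 g} -> pshift f G = pshift g G.
Proof. by move=> H; apply/eq_in_map => x Hx /=; rewrite H //; apply/mapP; exists x. Qed.

Lemma eq_pshift_inv f g G : pshift f G = pshift g G -> {in prios G, f =1 g}.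
Proof. by move/(congr1 prios); rewrite !prios_pshift => /eq_in_map. Qed.

Lemma pvars_psubst s G v :
  v \in pvars (psubst s G) <-> exists x, x \in pvars G /\ v \in tvars (s x).
Proof.
elim: G => [|y G IH] /=; first by split=> // -[x []].
rewrite !mem_cat; split.
- case/orP=> [/avars_asubst [x [Hx Hv]]|/IH [x [Hx Hv]]]; exists x;
    by rewrite mem_cat ?Hx ?orbT.
- case=> x []; rewrite mem_cat => /orP [Hx|Hx] Hv; apply/orP; [left|right].
    by apply/avars_asubst; exists x.
  by apply/IH; exists x.
Qed.

Lemma eq_psubst s s' G : {in pvars G, s =1 s'} -> psubst s G = psubst s' G.
Proof.
elim: G => //= y G IH H; rewrite IH => [|x Hx]; last by apply: H; rewrite mem_cat Hx orbT.
by rewrite (@eq_asubst s s' y.1) // => x Hx; apply: H; rewrite mem_cat Hx.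
Qed.

Lemma pvars_ren r G : pvars (psubst (ren r) G) = map r (pvars G).
Proof. by elim: G => //= y G; rewrite /pvars /= => ->; rewrite map_cat avars_ren. Qed.

Section Shiftings.
Local Open Scope ring_scope.

Lemma shifting_le f : shifting f -> {mono f : x y / x <= y}.
Proof. by case=> _; apply: le_mono. Qed.

Lemma shifting_lt f : shifting f -> {mono f : x y / x < y}.
Proof. by move=> /shifting_le Hf x y; rewrite !ltNge Hf. Qed.

Lemma shifting_id : shifting id.
Proof. by split=> //; exists id. Qed.

Lemma shifting_comp f g : shifting f -> shifting g -> shifting (f \o g).
Proof.
move=> [bf Hf] [bg Hg]; split; first exact: bij_comp.
by move=> x y Hxy /=; apply/Hf/Hg.
Qed.

Lemma shifting_inv f : shifting f -> exists g, [/\ shifting g, cancel f g & cancel g f].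
Proof.
move=> Hf; have [[g fK gK] _] := Hf; exists g; split=> //; split; first by exists f.
by move=> x y Hxy; rewrite -(shifting_lt Hf) !gK.
Qed.

Lemma pgoal_wf_map s f G : shifting f -> pgoal_wf G -> pgoal_wf (pshift f (psubst s G)).
Proof.
move=> /shifting_lt Hf; rewrite /pgoal_wf /pshift /psubst -map_comp sorted_map.
by apply: sub_sorted => x y; rewrite /relpre /prio_lt /= Hf.
Qed.

Lemma padd0 G : pgoal_wf G -> padd G [::] = G.
Proof.
move=> H; rewrite /padd cats0 sorted_sort //; first by move=> x y z; apply: le_trans.
by apply: sub_sorted H => x y; apply: ltW.
Qed.

Lemma padd_map s f F Y : shifting f ->
  padd (pshift f (psubst s F)) (pshift f (psubst s Y)) = pshift f (psubst s (padd F Y)).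
Proof.
move=> /shifting_le Hf; rewrite /padd /pshift /psubst -!map_comp -map_cat sort_map.
congr map; congr sort; apply: functional_extensionality => x.
by apply: functional_extensionality => y; rewrite /relpre /prio_le /= Hf.
Qed.

End Shiftings.

(** * Permutations of variables *)

Definition swap (u v x : nat) : nat := if x == u then v else if x == v then u else x.

Lemma swapK u v : involutive (swap u v).
Proof.
move=> x; rewrite /swap; case: (eqVneq x u) => [->|Hxu]; first by rewrite eqxx; case: eqVneq.
case: (eqVneq x v) => [->|Hxv]; first by rewrite eqxx.
by rewrite (negbTE Hxu) (negbTE Hxv).
Qed.

Lemma injective_maps_support (r : nat -> nat) (A : seq nat) :
  injective r -> (forall x, x \notin A -> r x = x) -> {in A, forall y, r y \in A}.
Proof.
move=> Hr Hout y Hy; apply/negPn/negP => Hry.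
by have /Hr E := Hout _ Hry; move: Hry; rewrite E Hy.
Qed.

(* Each new point [a] is sent to [g a] by post-composing with the transposition
   of [r' a] and [g a]. *)
Lemma injective_in_extend (L : seq nat) (g : nat -> nat) : {in L &, injective g} ->
  exists r, [/\ bijective r, {in L, r =1 g} & forall x, x \notin L -> x \notin map g L -> r x = x].
Proof.
elim: L => [|a L IH] Hg; first by exists id; split=> //; exists id.
have [r' [Hb' Hr' Ho']] : exists r', [/\ bijective r', {in L, r' =1 g} &
    forall x, x \notin L -> x \notin map g L -> r' x = x].
  by apply: IH => x y Hx Hy; apply: Hg; rewrite inE ?Hx ?Hy orbT.
case: (boolP (a \in L)) => HaL.
  exists r'; split=> // [x|x]; first by rewrite inE => /predU1P [->|]; apply: Hr'.
  by rewrite !inE !negb_or => /andP [_ H1] /andP [_ H2]; apply: Ho'.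
exists (swap (r' a) (g a) \o r'); split.
- by apply: bij_comp => //; apply: inv_bij; apply: swapK.
- move=> x; rewrite inE => /predU1P [->|Hx] /=; first by rewrite /swap eqxx.
  have Hxa : x != a by apply: contraNneq HaL => <-.
  rewrite /= (Hr' x Hx) /swap.
  have -> : (g x == r' a) = false.
    apply/negbTE; rewrite -Hr' //; apply: contra Hxa => /eqP E.
    by apply/eqP; apply: (bij_inj Hb').
  have -> // : (g x == g a) = false.
  apply/negbTE; apply: contra Hxa => /eqP E; apply/eqP.
  by apply: Hg => //; rewrite inE ?Hx ?eqxx ?orbT.
- move=> x; rewrite !inE !negb_or => /andP [Hxa HxL] /andP [Hxga HxgL] /=.
  rewrite (Ho' x HxL HxgL) /swap (negbTE Hxga).
  have -> // : (x == r' a) = false.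
  apply/negbTE; case: (boolP (a \in L ++ map g L)) => HaS.
    have : r' a \in L ++ map g L.
      apply: (injective_maps_support (bij_inj Hb')) => // y.
      by rewrite mem_cat negb_or => /andP [H1 H2]; apply: Ho'.
    by apply: contraL => /eqP <-; rewrite mem_cat negb_or HxL HxgL.
  by move: HaS; rewrite mem_cat negb_or => /andP [H1 H2]; rewrite (Ho' a H1 H2).
Qed.

Lemma bijective_glue (W V : seq nat) (f g : nat -> nat) :
  injective f -> injective g -> disjoint_vars W V ->
  (forall x y, x \in W -> y \in V -> f x != g y) ->
  exists r, [/\ bijective r, {in W, r =1 f} & {in V, r =1 g}].
Proof.
move=> Hf Hg HWV Hfg; pose h x := if x \in W then f x else g x.
have Hh : {in W ++ V &, injective h}.
  move=> x y; rewrite !mem_cat /h.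
  case: (boolP (x \in W)) => HxW; case: (boolP (y \in W)) => HyW.
  - by move=> _ _; apply: Hf.
  - by move=> _ Hy E; move: (Hfg x y HxW Hy); rewrite E eqxx.
  - by move=> Hx _ E; move: (Hfg y x HyW Hx); rewrite E eqxx.
  - by move=> _ _; apply: Hg.
have [r [Hr Hrh _]] := injective_in_extend Hh.
exists r; split=> // x Hx; rewrite Hrh ?mem_cat ?Hx ?orbT // /h.
  by rewrite Hx.
by case: ifP => // /HWV; rewrite Hx.
Qed.

Definition fresh (A : seq nat) (x : nat) : nat := (x + (\max_(y <- A) y).+1)%N.

Lemma fresh_inj A : injective (fresh A).
Proof. by move=> x y /addIn. Qed.

Lemma fresh_notin A x : fresh A x \notin A.
Proof.
apply/negP => /(@leq_bigmax_seq _ A predT id) /(_ erefl).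
by rewrite leqNgt /fresh addnS ltnS leq_addl.
Qed.

Lemma renamingE xi : renaming xi -> exists r ri, [/\ cancel r ri, cancel ri r & xi = ren r].
Proof.
case=> r [[ri rK riK] H]; exists r, ri; split=> //.
by apply: functional_extensionality => x; rewrite H.
Qed.

Lemma ren_id : ren id = Var.
Proof. exact: functional_extensionality. Qed.

Lemma renaming_ren r : bijective r -> renaming (ren r).
Proof. by exists r. Qed.

Lemma tsubst_renK r ri t : cancel r ri -> tsubst (ren ri) (tsubst (ren r) t) = t.
Proof.
move=> rK; rewrite tsubst_comp -[RHS]tsubst_Var; apply: eq_tsubst => x _.
by rewrite /ren /= rK.
Qed.
Lemma asubst_renK r ri a : cancel r ri -> asubst (ren ri) (asubst (ren r) a) = a.
Proof. by move=> rK; apply: term_of_atom_inj; rewrite !term_of_atom_subst tsubst_renK. Qed.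
Lemma psubst_renK r ri G : cancel r ri -> psubst (ren ri) (psubst (ren r) G) = G.
Proof.
move=> rK; rewrite /psubst -map_comp -[RHS]map_id; apply: eq_map => x /=.
by rewrite asubst_renK //; case: x.
Qed.

Lemma pshift_psubst_renK r ri f fi G : cancel r ri -> cancel f fi ->
  pshift fi (psubst (ren ri) (pshift f (psubst (ren r) G))) = G.
Proof.
move=> rK fK; rewrite -pshift_psubst psubst_renK // pshift_comp -[RHS]pshift_id.
by apply: eq_pshift => q _ /=; rewrite fK.
Qed.

Lemma cvars_csubst_ren r xi c :
  cvars (csubst (fun x => tsubst (ren r) (xi x)) c) = map r (cvars (csubst xi c)).
Proof. by rewrite /cvars /= map_cat -avars_ren -pvars_ren asubst_comp psubst_comp. Qed.

Lemma disjoint_vars_map r U V :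
  injective r -> disjoint_vars U V -> disjoint_vars (map r U) (map r V).
Proof. by move=> Hr H x /mapP [y Hy ->]; rewrite mem_map //; apply: H. Qed.

Definition ren_conj (r ri : nat -> nat) (th : subst) : subst :=
  fun x => tsubst (ren r) (th (ri x)).

Section RenConj.
Variables (r ri : nat -> nat).
Hypotheses (rK : cancel r ri) (riK : cancel ri r).

Lemma ren_conj_tsubst th t :
  tsubst (ren_conj r ri th) (tsubst (ren r) t) = tsubst (ren r) (tsubst th t).
Proof. by rewrite !tsubst_comp; apply: eq_tsubst => x _; rewrite /ren_conj /ren /= rK. Qed.

Lemma ren_conj_asubst th a :
  asubst (ren_conj r ri th) (asubst (ren r) a) = asubst (ren r) (asubst th a).
Proof. by apply: term_of_atom_inj; rewrite !term_of_atom_subst ren_conj_tsubst. Qed.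

Lemma ren_conj_psubst th G :
  psubst (ren_conj r ri th) (psubst (ren r) G) = psubst (ren r) (psubst th G).
Proof. by rewrite /psubst -!map_comp; apply: eq_map => x /=; rewrite ren_conj_asubst. Qed.

Lemma idempotent_ren_conj th : Defs.idempotent th -> Defs.idempotent (ren_conj r ri th).
Proof. by move=> H x; rewrite {1}/ren_conj ren_conj_tsubst H. Qed.

Lemma subst_vars_ren_conj th v : subst_vars (ren_conj r ri th) v -> subst_vars th (ri v).
Proof.
case=> [H|[x [Hx Hv]]].
  by left=> E; apply: H; rewrite /ren_conj E /ren /= riK.
right; exists (ri x); split.
  by move=> E; apply: Hx; rewrite /ren_conj E /ren /= riK.
by move: Hv; rewrite /ren_conj tvars_ren => /mapP [y Hy ->]; rewrite rK.
Qed.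

Lemma relevant_ren_conj th a b : relevant th a b ->
  relevant (ren_conj r ri th) (asubst (ren r) a) (asubst (ren r) b).
Proof.
move=> H v /subst_vars_ren_conj /H; rewrite !avars_ren => -[Hv|Hv]; [left|right];
  by apply/mapP; exists (ri v).
Qed.

Lemma mgu_ren_conj th a b :
  mgu th a b -> mgu (ren_conj r ri th) (asubst (ren r) a) (asubst (ren r) b).
Proof.
case=> U M; split; first by rewrite /unifier !ren_conj_asubst U.
move=> s Us; have [eta Heta] : exists eta : subst, forall x, s (r x) = tsubst eta (th x).
  by apply: M; move: Us; rewrite /unifier !asubst_comp.
exists (fun x => tsubst eta (ren ri x)) => x.
rewrite /ren_conj tsubst_comp -{1}(riK x) Heta; apply: eq_tsubst => y _ /=; by rewrite rK.
Qed.

End RenConj.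

(** * Most general unifiers *)

Lemma relevant_fixed_out th a b x :
  relevant th a b -> x \notin avars a ++ avars b -> th x = Var x.
Proof.
move=> H Hx; case: (th x =P Var x) => // Hne.
have /H [Hv|Hv] : subst_vars th x by left.
  by move: Hx; rewrite mem_cat Hv.
by move: Hx; rewrite mem_cat Hv orbT.
Qed.

Lemma relevant_tvars th a b x v : relevant th a b -> v \in tvars (th x) ->
  v = x \/ v \in avars a \/ v \in avars b.
Proof.
move=> Hr Hv; case: (th x =P Var x) => [E|Ne].
  by left; move: Hv; rewrite E inE => /eqP.
by right; apply: Hr; right; exists x.
Qed.

(* [th2 = e1 th1] and [th1 = e2 th2]; by idempotence every variable [v] occurring
   in the range of [th1] is fixed by [th1], so [e1] sends it to a variable [d0 v]
   injectively; outside [a] and [b] both mgus are the identity, so [d0] extends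
   to a permutation. *)
Lemma mgu_unique_ren a b th1 th2 : Defs.idempotent th1 -> relevant th1 a b -> mgu th1 a b ->
  relevant th2 a b -> mgu th2 a b ->
  exists d, bijective d /\ forall x, th2 x = tsubst (ren d) (th1 x).
Proof.
move=> Hid Hr1 [U1 M1] Hr2 [U2 M2].
set Z := avars a ++ avars b.
have [e1 He1] := M1 th2 U2.
have [e2 He2] := M2 th1 U1.
have Hfix x : {in tvars (th1 x), forall v, th1 v = Var v}.
  by apply: tsubst_fixed_vars; apply: Hid.
pose d0 v := if e1 v is Var w then w else v.
have Hd0 v : th1 v = Var v -> e1 v = Var (d0 v) /\ e2 (d0 v) = Var v.
  move=> Hv; have : tsubst e2 (e1 v) = Var v by rewrite -Hv He2 He1 Hv.
  by rewrite /d0; case: (e1 v) => //= w ->.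
have Hinj u v : th1 u = Var u -> th1 v = Var v -> d0 u = d0 v -> u = v.
  move=> Hu Hv E; have [_ E1] := Hd0 u Hu; have [_ E2] := Hd0 v Hv.
  by move: E1; rewrite E E2 => -[].
set L := [seq v <- Z | th1 v == Var v].
have HL v : v \in L -> th1 v = Var v by rewrite mem_filter => /andP [/eqP].
have HLZ v : v \in L -> v \in Z by rewrite mem_filter => /andP [].
have [r [Hb Hr Ho]] := @injective_in_extend L d0 (fun u v Hu Hv => Hinj u v (HL u Hu) (HL v Hv)).
exists r; split=> // x; rewrite He1; apply: eq_tsubst => v Hv.
have Fv := Hfix x v Hv; have [-> _] := Hd0 v Fv; rewrite /ren; congr Var.
case: (boolP (v \in Z)) => HvZ; first by rewrite Hr // mem_filter HvZ Fv eqxx.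
have Ed : d0 v = v.
  have := relevant_fixed_out Hr2 HvZ; rewrite He1 Fv /=.
  by have [-> _] := Hd0 v Fv => -[].
rewrite Ed Ho //; first by apply: contra HvZ; apply: HLZ.
apply/mapP => -[u Hu E]; have Eu : u = v by apply: Hinj => //; [apply: HL | rewrite Ed].
by move: HvZ; rewrite -Eu HLZ.
Qed.

Lemma mgu_ren_variant th1 th2 a1 b1 a2 b2 mu mui : cancel mu mui -> cancel mui mu ->
  Defs.idempotent th1 -> relevant th1 a1 b1 -> mgu th1 a1 b1 ->
  relevant th2 a2 b2 -> mgu th2 a2 b2 ->
  asubst (ren mu) a1 = a2 -> asubst (ren mu) b1 = b2 ->
  exists g gi, [/\ cancel g gi, cancel gi g &
    forall x, th2 (mu x) = tsubst (ren g) (th1 x)].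
Proof.
move=> muK muiK Hid1 Hrel1 Hmgu1 Hrel2 Hmgu2 Ea Eb; subst a2 b2.
have [d [[di dK diK] Hth]] := mgu_unique_ren (idempotent_ren_conj muK Hid1)
  (relevant_ren_conj muK muiK Hrel1) (mgu_ren_conj muK muiK Hmgu1) Hrel2 Hmgu2.
exists (d \o mu), (mui \o di); split; try exact: can_comp.
by move=> x; rewrite Hth /ren_conj muK tsubst_comp.
Qed.

(** * Variants of steps *)

Lemma cvars_ren r c : cvars (csubst (ren r) c) = map r (cvars c).
Proof. by rewrite /cvars /= avars_ren pvars_ren map_cat. Qed.

Lemma is_stepP s : is_step s -> exists a p F r1 r1i,
  [/\ st_src s = (a, p) :: F, pgoal_wf F, cancel r1 r1i, cancel r1i r1 & st_ren s = ren r1] /\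
  [/\ disjoint_vars (pvars (st_src s)) (map r1 (cvars (st_cl s))),
      Defs.idempotent (st_mgu s),
      relevant (st_mgu s) a (asubst (ren r1) (Defs.head (st_cl s))),
      mgu (st_mgu s) a (asubst (ren r1) (Defs.head (st_cl s))) &
      st_tgt s = psubst (st_mgu s)
        (padd F (pshift (st_sh s) (psubst (ren r1) (body (st_cl s)))))].
Proof.
case=> a [p [F [E [Hwf [_ [Hren [Hdis [Hid [Hrel [Hmgu [_ [_ Htgt]]]]]]]]]]]].
have [r1 [r1i [rK riK Er]]] := renamingE Hren.
exists a, p, F, r1, r1i; split; split; rewrite -?Er //.
- by move: Hwf; rewrite E /pgoal_wf /= => /path_sorted.
- by rewrite -cvars_ren -Er.
Qed.

Definition variant_step (r ri : nat -> nat) (sg : rat -> rat) (s : step) : step :=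
  Step (pshift sg (psubst (ren r) (st_src s))) (st_cl s)
       (fun x => tsubst (ren r) (st_ren s x)) (ren_conj r ri (st_mgu s)) (sg \o st_sh s)
       (pshift sg (psubst (ren r) (st_tgt s))).

Lemma is_step_variant r ri sg s : cancel r ri -> cancel ri r -> shifting sg ->
  is_step s -> is_step (variant_step r ri sg s).
Proof.
move=> rK riK Hsg [a [p [F [Hsrc [Hwf [Hwb [Hren [Hdis [Hid [Hrel [Hmgu [Hsh [Hnc Htgt]]]]]]]]]]]]].
have EB : psubst (fun x => tsubst (ren r) (st_ren s x)) (body (st_cl s)) =
          psubst (ren r) (psubst (st_ren s) (body (st_cl s))) by rewrite psubst_comp.
have EH : asubst (fun x => tsubst (ren r) (st_ren s x)) (Defs.head (st_cl s)) =
          asubst (ren r) (asubst (st_ren s) (Defs.head (st_cl s))) by rewrite asubst_comp.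
exists (asubst (ren r) a), (sg p), (pshift sg (psubst (ren r) F)).
split; first by rewrite /= Hsrc.
split; first exact: pgoal_wf_map.
split=> //; split.
  have [q [qi [qK qiK Eq]]] := renamingE Hren; rewrite /= Eq.
  by apply: renaming_ren; apply: bij_comp; [exists ri|exists qi].
split.
  rewrite /= cvars_csubst_ren pvars_pshift pvars_ren.
  exact/disjoint_vars_map/Hdis/can_inj/rK.
split; first exact: idempotent_ren_conj.
split; first by rewrite /= EH; apply: relevant_ren_conj.
split; first by rewrite /= EH; apply: mgu_ren_conj.
split; first exact: shifting_comp.
split.
  move=> x; rewrite /= EB prios_pshift prios_psubst -pshift_comp !prios_pshift prios_psubst.
  move=> /mapP [y Hy ->]; rewrite mem_map; last by apply: (bij_inj (proj1 Hsg)).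
  by have := Hnc y; rewrite prios_pshift prios_psubst; apply.
rewrite /= EB -pshift_comp [X in padd _ (pshift sg X)]pshift_psubst padd_map //.
by rewrite -pshift_psubst ren_conj_psubst // Htgt.
Qed.

Lemma variant_lowerings_each_other s1 s2 r ri sg sgi a p F :
  is_step s1 -> is_step s2 -> st_cl s2 = st_cl s1 -> cancel r ri ->
  shifting sg -> cancel sg sgi -> shifting sgi ->
  st_src s1 = (a, p) :: F -> pgoal_wf F ->
  st_src s2 = pshift sg (psubst (ren r) (st_src s1)) -> lowerings_each_other s1 s2.
Proof.
move=> H1 H2 Ec rK Hsg sgK Hsgi E1 Hwf E2; split.
- exists (ren ri), sgi, [::], (asubst (ren r) a), (sg p), (pshift sg (psubst (ren r) F)).
  do 3 split=> //; split; first by rewrite E2 E1.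
  do 2 split=> //.
  by rewrite pshift_psubst_renK // padd0 // E1 asubst_renK // sgK.
- exists (ren r), sg, [::], a, p, F; do 6 split=> //.
  by rewrite E2 E1 padd0 //; apply: pgoal_wf_map.
Qed.

Lemma congruent_lowering_same_src s1 s2 rho a p K :
  is_step s1 -> is_step s2 -> st_cl s2 = st_cl s1 ->
  st_src s1 = (a, p) :: K -> st_src s2 = st_src s1 -> pgoal_wf K ->
  shifting rho -> pshift rho K = K ->
  pshift rho (pshift (st_sh s1) (body (st_cl s1))) = pshift (st_sh s2) (body (st_cl s1)) ->
  congruent_lowering s2 s1.
Proof.
move=> H1 H2 Ec E1 E2 Hwf Hrho RK RB.
exists Var, id, [::], a, p, K; split.
  do 4 split=> //; split; first exact: shifting_id.
  by split=> //; rewrite E2 E1 asubst_Var psubst_Var pshift_id padd0.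
by exists rho; rewrite pshift_id Ec.
Qed.

Section Derivations.
Variable S : step_set.
Hypothesis HS : scheduling_rule S.

Lemma scheduling_rule_step s : S s -> is_step s.
Proof. by case: HS => H _; apply: H. Qed.

(* Two steps of [S] from variant sources are lowerings of each other, so by
   determinism the shiftings they use agree up to one shifting [z]. *)
Lemma scheduling_variant_shifting s1 s2 r ri sg a p F : S s1 -> S s2 ->
  st_cl s2 = st_cl s1 -> cancel r ri -> shifting sg ->
  st_src s1 = (a, p) :: F ->
  st_src s2 = pshift sg (psubst (ren r) (st_src s1)) ->
  exists z, [/\ shifting z, pshift z F = pshift sg F &
    pshift z (pshift (st_sh s1) (body (st_cl s1))) = pshift (st_sh s2) (body (st_cl s1))].
Proof.
move=> S1 S2 Ec rK Hsg E1 E2; have [_ [_ Hdet]] := HS.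
have [sgi [Hsgi sgK _]] := shifting_inv Hsg.
have H1 := scheduling_rule_step S1; have H2 := scheduling_rule_step S2.
have [a1 [p1 [F1 [_ [_ [[E1' Hwf _ _ _] _]]]]]] := is_stepP H1.
move: E1'; rewrite E1 => -[_ _ EF]; subst F1.
have [_ [lam [sig [X [a' [p' [K [LW [rho [Hrho [R1 R2]]]]]]]]]]] :=
  Hdet s1 s2 S1 S2 (variant_lowerings_each_other H1 H2 Ec rK Hsg sgK Hsgi E1 Hwf E2).
case: LW => _ [_ [_ [Es1 [Hsig [_ Es2]]]]].
move: Es1; rewrite E1 => -[_ _ EK]; subst K.
move: Es2; rewrite E2 E1 => -[_ _ EF].
have HX : X = [::].
  have := congr1 size EF; rewrite size_padd !size_pshift !size_psubst.
  by move/eqP; rewrite -{1}(addn0 (size F)) eqn_add2l eq_sym => /eqP /size0nil.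
subst X; rewrite padd0 in EF; last exact: pgoal_wf_map.
exists rho; split=> //; last by rewrite R2 Ec.
rewrite R1; apply: eq_pshift => q Hq.
by have := congr1 prios EF; rewrite !prios_pshift !prios_psubst => /eq_in_map /(_ q Hq) ->.
Qed.

(* Completeness provides a step of [S] with the same source and clause as the
   variant; the two are congruent lowerings of each other, and completeness
   again puts the variant in [S]. *)
Lemma scheduling_rule_variant s r ri sg : S s -> cancel r ri -> cancel ri r ->
  shifting sg -> S (variant_step r ri sg s).
Proof.
move=> Ss rK riK Hsg; have [_ [[Hc1 Hc2] _]] := HS.
have Hs := scheduling_rule_step Ss; have Hvs := is_step_variant rK riK Hsg Hs.
have [s' [S' [Es' Ec']]] := Hc1 (st_src (variant_step r ri sg s)) (st_cl s)
  (ex_intro _ _ (conj Hvs (conj erefl erefl))).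
have Hs' := scheduling_rule_step S'.
have [a [p [F [_ [_ [[EF HwF _ _ _] _]]]]]] := is_stepP Hs.
have [z [Hz Rz1 Rz2]] := scheduling_variant_shifting Ss S' Ec' rK Hsg EF Es'.
have [sgi [Hsgi sgK sgiK]] := shifting_inv Hsg.
have [zi [Hzi zK ziK]] := shifting_inv Hz.
have HzF : {in prios F, z =1 sg} by apply: eq_pshift_inv.
set K := pshift sg (psubst (ren r) F).
have EK : st_src (variant_step r ri sg s) = (asubst (ren r) a, sg p) :: K by rewrite /= EF.
have HwK : pgoal_wf K by apply: pgoal_wf_map.
apply: (Hc2 s' _ S' Hvs); split.
- apply: (congruent_lowering_same_src (rho := z \o sgi) Hvs Hs' Ec' EK) => //.
  + exact: shifting_comp.
  + rewrite /K pshift_comp !pshift_psubst; congr psubst.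
    by rewrite -Rz1; apply: eq_pshift => q _ /=; rewrite sgK.
  + by rewrite /= -Rz2 !pshift_comp; apply: eq_pshift => q _ /=; rewrite sgK.
- apply: (congruent_lowering_same_src (rho := sg \o zi) Hs' Hvs (esym Ec')
    (etrans Es' EK) (esym Es') HwK).
  + exact: shifting_comp.
  + rewrite /K pshift_comp !pshift_psubst; congr psubst.
    by apply: eq_pshift => q Hq /=; rewrite -{1}(HzF q Hq) zK.
  + by rewrite /= Ec' -Rz2 !pshift_comp; apply: eq_pshift => q _ /=; rewrite zK.
Qed.

Lemma scheduling_step_variant s1 s2 rho rhoi sg (W : seq nat) :
  S s1 -> S s2 -> st_cl s2 = st_cl s1 -> cancel rho rhoi -> shifting sg ->
  st_src s2 = pshift sg (psubst (ren rho) (st_src s1)) ->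
  {subset pvars (st_src s1) <= W} ->
  disjoint_vars W (cvars (csubst (st_ren s1) (st_cl s1))) ->
  disjoint_vars (map rho W) (cvars (csubst (st_ren s2) (st_cl s2))) ->
  exists g gi z, [/\ cancel g gi, cancel gi g, shifting z,
    st_tgt s2 = pshift z (psubst (ren g) (st_tgt s1)) &
    {in W, forall x, st_mgu s2 (rho x) = tsubst (ren g) (st_mgu s1 x)}].
Proof.
move=> S1 S2 Ec rhoK Hsg E2 HW D1 D2.
have [a [p [F [r1 [r1i [[E1 HwF r1K r1iK Er1] [_ Hid1 Hrel1 Hmgu1 Ht1]]]]]]] :=
  is_stepP (scheduling_rule_step S1).
have [a2 [p2 [F2 [r2 [r2i [[E2' _ r2K _ Er2] [_ _ Hrel2 Hmgu2 Ht2]]]]]]] :=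
  is_stepP (scheduling_rule_step S2).
move: E2'; rewrite E2 E1 => -[Ea2 _ EF2].
rewrite Er1 cvars_ren in D1; rewrite Er2 cvars_ren Ec in D2.
set c := st_cl s1; rewrite -/c in Hrel1 Hmgu1 Ht1; rewrite Ec -/c in Hrel2 Hmgu2 Ht2.
(* [mu] agrees with [rho] on [W] and sends the renamed clause of [s1] to that of [s2]. *)
have [mu [[mui muK muiK] HmuW Hmuc]] : exists mu, [/\ bijective mu, {in W, mu =1 rho} &
    {in map r1 (cvars c), mu =1 r2 \o r1i}].
  apply: bijective_glue => //.
  - exact: can_inj rhoK.
  - exact: inj_comp (can_inj r2K) (can_inj r1iK).
  move=> x _ Hx /mapP [y Hy ->]; apply/eqP => E.
  by have := D2 (rho x) (map_f _ Hx); rewrite E /= r1K map_f.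
have {}Hmuc y : y \in cvars c -> mu (r1 y) = r2 y by move=> Hy; rewrite Hmuc ?map_f //= r1K.
have HaW : {subset avars a <= W} by move=> x Hx; apply: HW; rewrite E1 /= mem_cat Hx.
have HFW : {subset pvars F <= W} by move=> x Hx; apply: HW; rewrite E1 /= mem_cat Hx orbT.
have Ea : asubst (ren mu) a = a2.
  by rewrite -Ea2; apply: eq_asubst => x Hx; rewrite /ren HmuW // HaW.
have Eb : asubst (ren mu) (asubst (ren r1) (Defs.head c)) = asubst (ren r2) (Defs.head c).
  rewrite asubst_comp; apply: eq_asubst => y Hy; rewrite /ren /= Hmuc //.
  by rewrite /cvars mem_cat Hy.
have [g [gi [gK giK Key]]] :=
  mgu_ren_variant muK muiK Hid1 Hrel1 Hmgu1 Hrel2 Hmgu2 Ea Eb.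
have [z [Hz Rz1 Rz2]] := scheduling_variant_shifting S1 S2 Ec rhoK Hsg E1 E2.
exists g, gi, z; split=> //.
- rewrite Ht2 Ht1 -EF2 /=.
  have EF : pshift sg (psubst (ren rho) F) = pshift z (psubst (ren mu) F).
    rewrite !pshift_psubst -Rz1; apply: eq_psubst => x Hx.
    by rewrite pvars_pshift in Hx; rewrite /ren HmuW // HFW.
  have EY : pshift (st_sh s2) (psubst (ren r2) (body c)) =
            pshift z (psubst (ren mu) (pshift (st_sh s1) (psubst (ren r1) (body c)))).
    rewrite !pshift_psubst Rz2 psubst_comp.
    apply: eq_psubst => y; rewrite pvars_pshift => Hy; rewrite /ren /= Hmuc //.
    by rewrite /cvars mem_cat Hy orbT.
  rewrite EF EY padd_map // -pshift_psubst; congr pshift; rewrite !psubst_comp.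
  by apply: eq_psubst => x _ /=; rewrite Key.
- by move=> x Hx; rewrite -HmuW // Key.
Qed.

(** * Derivations *)

Variables (P : program) (G0 : pgoal).

Lemma in_resS n k : in_res n k.+1 = in_len n k.
Proof. by case: n. Qed.

Lemma in_len_res n k : in_len n k -> in_res n k.
Proof. by case: n => //= m /ltnW. Qed.

Lemma in_res_len n j k : in_res n k -> (j < k)%N -> in_len n j.
Proof. by case: n => //= m H1 H2; apply: leq_trans H2 H1. Qed.

Lemma in_res_le n j k : in_res n k -> (j <= k)%N -> in_res n j.
Proof. by case: n => //= m H1 H2; apply: leq_trans H2 H1. Qed.

Definition clause_vars (f : nat -> step) k := cvars (csubst (st_ren (f k)) (st_cl (f k))).

Fixpoint used_vars (f : nat -> step) k : seq nat :=
  if k is k'.+1 then used_vars f k' ++ clause_vars f k' else pvars G0.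

Lemma used_varsP f k x : x \in used_vars f k ->
  x \in pvars G0 \/ exists2 t, (t < k)%N & x \in clause_vars f t.
Proof.
elim: k => [|k IH] /=; first by left.
rewrite mem_cat => /orP [/IH [H|[t Ht Hx]]|Hx]; first by left.
  by right; exists t => //; apply: ltnW.
by right; exists k.
Qed.

Lemma used_vars_monotone f k k' : (k <= k')%N -> {subset used_vars f k <= used_vars f k'}.
Proof.
elim: k' => [|k' IH]; first by rewrite leqn0 => /eqP->.
by rewrite leq_eqVlt => /predU1P [->//|H] x Hx /=; rewrite mem_cat IH.
Qed.

Lemma clause_vars_used f t k : (t < k)%N -> {subset clause_vars f t <= used_vars f k}.
Proof. by move=> H x Hx; apply: (used_vars_monotone H); rewrite /= mem_cat Hx orbT. Qed.

Lemma derivation_fresh_vars f n k : pSLD_derivation P S G0 f n -> in_len n k ->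
  disjoint_vars (used_vars f k) (clause_vars f k).
Proof.
move=> D Hk x /used_varsP [Hx|[t Ht Hx]]; have [_ [_ [_ [D1 D2]]]] := D k Hk.
  exact: D1.
exact: D2 t Ht x Hx.
Qed.

Lemma derivation_vars_used f n k : pSLD_derivation P S G0 f n -> in_res n k ->
  {subset pvars (resolvent G0 f k) <= used_vars f k} /\
  {subset pvars (inst G0 f k) <= used_vars f k}.
Proof.
move=> D; elim: k => [|k IH] Hk; first by split.
have Hk' : in_len n k by rewrite -in_resS.
have [IH1 IH2] := IH (in_len_res Hk').
have [Sk [_ [Esrc _]]] := D k Hk'.
have [a [p [F [r1 [r1i [[E1 _ _ _ Er] [_ _ Hrel _ Ht]]]]]]] := is_stepP (scheduling_rule_step Sk).
have Hsrc : {subset pvars (st_src (f k)) <= used_vars f k} by rewrite Esrc.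
have Hmgu x v : x \in used_vars f k.+1 -> v \in tvars (st_mgu (f k) x) ->
    v \in used_vars f k.+1.
  move=> Hx /(relevant_tvars Hrel) [->//|[Ha|Hb]].
    by rewrite /= mem_cat Hsrc // E1 /= mem_cat Ha.
  by rewrite /= mem_cat /clause_vars Er /cvars /= mem_cat Hb !orbT.
split.
- move=> v /=; rewrite Ht => /pvars_psubst [x [Hx Hv]]; apply: (Hmgu x) => //.
  move: Hx; rewrite pvars_padd => /orP [Hx|Hx].
    by rewrite /= mem_cat Hsrc // E1 /= mem_cat Hx orbT.
  by rewrite /= mem_cat /clause_vars Er /cvars /= mem_cat -(pvars_pshift (st_sh (f k))) Hx !orbT.
- move=> v /= /pvars_psubst [x [Hx Hv]]; apply: (Hmgu x) => //.
  by rewrite /= mem_cat IH2.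
Qed.

Lemma eq_resolvent f g j :
  (forall t, (t < j)%N -> f t = g t) -> resolvent G0 f j = resolvent G0 g j.
Proof. by case: j => //= j H; rewrite H. Qed.

Lemma eq_derivation f g k : (forall t, (t < k)%N -> f t = g t) ->
  pSLD_derivation P S G0 g (Some k) -> pSLD_derivation P S G0 f (Some k).
Proof.
move=> H D j /= Hj; have [Sj [Pj [Ej [Dj Dj']]]] := D j Hj.
rewrite /clause_vars (eq_resolvent (g := g)) ?(H j Hj); last first.
  by move=> t Ht; apply/H/(ltn_trans Ht).
by do 4 split=> //; move=> t Ht; rewrite H; [apply: Dj' | apply: ltn_trans Ht Hj].
Qed.

Lemma derivation_prefix f n k : pSLD_derivation P S G0 f n -> in_res n k ->
  pSLD_derivation P S G0 f (Some k).
Proof. by move=> D Hk j /= Hj; apply/D/(in_res_len Hk Hj). Qed.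

Lemma same_clauses_variant f g n1 n2 k :
  pSLD_derivation P S G0 f n1 -> pSLD_derivation P S G0 g n2 -> in_res n1 k -> in_res n2 k ->
  (forall t, (t < k)%N -> st_cl (g t) = st_cl (f t)) ->
  forall u, (u <= k)%N -> exists gm gmi z, [/\ cancel gm gmi, cancel gmi gm, shifting z,
    resolvent G0 g u = pshift z (psubst (ren gm) (resolvent G0 f u)) &
    inst G0 g u = psubst (ren gm) (inst G0 f u)].
Proof.
move=> Df Dg Hk1 Hk2 Hcl; elim=> [|u IH] Hu.
  exists id, id, id; split=> //; first exact: shifting_id.
    by rewrite /= ren_id psubst_Var pshift_id.
  by rewrite /= ren_id psubst_Var.
have [gm [gmi [z [gmK gmiK Hz Er Ei]]]] := IH (ltnW Hu).
have Hf := in_res_len Hk1 Hu; have Hg := in_res_len Hk2 Hu.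
have [Sf [_ [Esf _]]] := Df u Hf; have [Sg [_ [Esg _]]] := Dg u Hg.
have [Bf1 Bf2] := derivation_vars_used Df (in_len_res Hf).
have [Bg1 Bg2] := derivation_vars_used Dg (in_len_res Hg).
set W := pvars (resolvent G0 f u) ++ pvars (inst G0 f u).
have [g' [gi' [z' [g'K gi'K Hz' Et Em]]]] :
    exists g' gi' z', [/\ cancel g' gi', cancel gi' g', shifting z',
      st_tgt (g u) = pshift z' (psubst (ren g') (st_tgt (f u))) &
      {in W, forall x, st_mgu (g u) (gm x) = tsubst (ren g') (st_mgu (f u) x)}].
  apply: scheduling_step_variant gmK Hz _ _ _ _ => //.
  - exact: Hcl.
  - by rewrite Esg Esf Er.
  - by move=> x Hx; rewrite /W mem_cat -Esf Hx.
  - move=> x; rewrite mem_cat => /orP [/Bf1|/Bf2]; exact: derivation_fresh_vars Df Hf x.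
  - move=> x; rewrite map_cat mem_cat -!pvars_ren -Ei -(pvars_pshift z) -Er.
    by move=> /orP [/Bg1|/Bg2]; apply: derivation_fresh_vars Dg Hg x.
exists g', gi', z'; split=> //=.
rewrite Ei !psubst_comp; apply: eq_psubst => x Hx /=.
by rewrite Em // /W mem_cat Hx orbT.
Qed.

Definition prune_at (f : nat -> step) i j : Prop :=
  exists (tau : subst) (tau' : rat -> rat), renaming tau /\ shifting tau' /\
    inst G0 f j = psubst tau (inst G0 f i) /\
    resolvent G0 f j = pshift tau' (psubst tau (resolvent G0 f i)).

Lemma prunedP f n : pruned_by_pEVRL G0 f n <->
  exists i j, [/\ (i < j)%N, in_res n j & prune_at f i j].
Proof.
split; first by case=> i [j [tau [tau' [Hij [Hj H]]]]]; exists i, j; split=> //; exists tau, tau'.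
by case=> i [j [Hij Hj [tau [tau' H]]]]; exists i, j, tau, tau'.
Qed.

(* Pruning only inspects the resolvents and instantiated goals up to [j], which
   are the same up to variants for all derivations with the same clauses. *)
Lemma prune_at_same_clauses f g n1 n2 k i j :
  pSLD_derivation P S G0 f n1 -> pSLD_derivation P S G0 g n2 -> in_res n1 k -> in_res n2 k ->
  (forall t, (t < k)%N -> st_cl (g t) = st_cl (f t)) ->
  (i < j)%N -> (j <= k)%N -> prune_at f i j -> pruned_by_pEVRL G0 g n2.
Proof.
move=> Df Dg Hk1 Hk2 Hcl Hij Hjk [tau [tau' [Ht [Ht' [E1 E2]]]]].
have Hik : (i <= k)%N by apply: leq_trans (ltnW Hij) Hjk.
have [gi [gii [zi [giK giiK Hzi Eri Eii]]]] := same_clauses_variant Df Dg Hk1 Hk2 Hcl Hik.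
have [gj [gji [zj [gjK gjiK Hzj Erj Eij]]]] := same_clauses_variant Df Dg Hk1 Hk2 Hcl Hjk.
have [rt [rti [rtK rtiK Ert]]] := renamingE Ht.
have [zii [Hzii ziK ziiK]] := shifting_inv Hzi.
apply/prunedP; exists i, j; split=> //; first exact: in_res_le Hk2 Hjk.
exists (ren (gj \o rt \o gii)), (zj \o tau' \o zii); split.
  by apply/renaming_ren/bij_comp; [apply: bij_comp; [exists gji|exists rti]|exists gi].
split; first by apply: shifting_comp => //; apply: shifting_comp.
have Fi : inst G0 f i = psubst (ren gii) (inst G0 g i) by rewrite Eii psubst_renK.
have Fr : resolvent G0 f i = pshift zii (psubst (ren gii) (resolvent G0 g i)).
  by rewrite Eri pshift_psubst_renK.
split; first by rewrite Eij E1 Fi Ert !psubst_comp.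
by rewrite Erj E2 Fr Ert !pshift_psubst !psubst_comp !pshift_comp.
Qed.

Definition set_step (g : nat -> step) k (s : step) : nat -> step :=
  fun t => if t == k then s else g t.

(* The renaming [b] puts the clause of [s] apart with variables fresh for [g]. *)
Lemma derivation_extend g k s gm z :
  pSLD_derivation P S G0 g (Some k) -> S s -> List.In (st_cl s) P ->
  injective gm -> shifting z ->
  resolvent G0 g k = pshift z (psubst (ren gm) (st_src s)) ->
  exists b bi, injective b /\
    pSLD_derivation P S G0 (set_step g k (variant_step b bi z s)) (Some k.+1).
Proof.
move=> D Ss HP Hgm Hz Er.
have [_ [_ [_ [_ [_ [_ [_ [Hdis _]]]]]]]] := scheduling_rule_step Ss.
set src := st_src s; set cvs := cvars (csubst (st_ren s) (st_cl s)).
set A := used_vars g k ++ map gm (pvars src).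
have [b [[bi bK biK] Hbsrc Hbc]] :
    exists b, [/\ bijective b, {in pvars src, b =1 gm} & {in cvs, b =1 fresh A}].
  apply: bijective_glue => //; first exact: fresh_inj.
  move=> x y Hx _; apply: contraNneq (fresh_notin A y) => <-.
  by rewrite mem_cat map_f ?orbT.
have Hnew v : v \in used_vars g k -> v \notin map b cvs.
  move=> Hv; apply/mapP => -[w Hw E]; have := fresh_notin A w.
  by rewrite -Hbc // -E mem_cat Hv.
exists b, bi; split; first exact: can_inj bK.
move=> j /= Hj.
have Hres : resolvent G0 (set_step g k (variant_step b bi z s)) j = resolvent G0 g j.
  by apply: eq_resolvent => t Ht; rewrite /set_step (ltn_eqF (leq_trans Ht Hj)).
case: (ltngtP j k) => [Hjk|Hkj|Ejk].
- have [A1 [A2 [A3 [A4 A5]]]] := D j Hjk.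
  rewrite Hres /set_step (ltn_eqF Hjk); do 4 split=> //.
  by move=> t Ht; rewrite (ltn_eqF (ltn_trans Ht Hjk)); apply: A5.
- by move: Hj; rewrite ltnS leqNgt Hkj.
- subst j; rewrite Hres /set_step eqxx; split; first exact: scheduling_rule_variant.
  split=> //; split.
    rewrite /= Er; congr pshift; apply: eq_psubst => x Hx.
    by rewrite /ren Hbsrc.
  split.
    move=> x Hx; rewrite /= cvars_csubst_ren; apply: Hnew.
    exact: (@used_vars_monotone g 0 k (leq0n k) x Hx).
  move=> t Ht x Hx; rewrite /= cvars_csubst_ren; apply/Hnew/(clause_vars_used Ht).
  by move: Hx; rewrite /clause_vars /set_step (ltn_eqF Ht).
Qed.

Lemma prune_at_replay f m i j : pSLD_derivation P S G0 f (Some m) ->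
  (i < j)%N -> (j <= m)%N -> prune_at f i j ->
  forall u, (j + u <= m)%N -> exists g gm z, [/\ injective gm, shifting z,
    pSLD_derivation P S G0 g (Some (i + u)) &
    resolvent G0 g (i + u) = pshift z (psubst (ren gm) (resolvent G0 f (j + u)))].
Proof.
move=> D Hij Hjm [tau [tau' [Ht [Ht' [_ E2]]]]].
elim=> [|u IH] Hu.
  have [rt [rti [rtK rtiK Ert]]] := renamingE Ht.
  have [ti [Hti tK tiK]] := shifting_inv Ht'.
  exists f, rti, ti; split=> //; first exact: can_inj rtiK.
    by apply: derivation_prefix D _; rewrite /= addn0; apply: leq_trans (ltnW Hij) Hjm.
  by rewrite !addn0 E2 Ert pshift_psubst_renK.
have Hju : (j + u < m)%N by rewrite -addnS.
have [g [gm [z [Hgm Hz Dg Eg]]]] := IH (ltnW Hju).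
have [Ss [HP [Esrc _]]] := D _ Hju.
rewrite -Esrc in Eg.
have [b [bi [Hb Dg']]] := derivation_extend Dg Ss HP Hgm Hz Eg.
exists (set_step g (i + u) (variant_step b bi z (f (j + u)))), b, z; split=> //.
  by rewrite addnS.
by rewrite !addnS /= /set_step eqxx.
Qed.

Lemma prune_at_shorten f m i j u : pSLD_derivation P S G0 f (Some m) ->
  (i < j)%N -> (j <= m)%N -> prune_at f i j -> (j + u <= m)%N ->
  exists g, pSLD_derivation P S G0 g (Some (i + u)) /\
    size (resolvent G0 g (i + u)) = size (resolvent G0 f (j + u)).
Proof.
move=> D Hij Hjm Hp Hu.
have [g [gm [z [_ _ Dg Eg]]]] := prune_at_replay D Hij Hjm Hp Hu.
by exists g; rewrite Eg size_pshift size_psubst.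
Qed.

Definition max_body_size : nat := \max_(c <- P) size (body c).

Lemma size_body_le c : List.In c P -> (size (body c) <= max_body_size)%N.
Proof.
rewrite /max_body_size; elim: P => //= d Q IH [<-|H]; rewrite big_cons.
  exact: leq_maxl.
exact: leq_trans (IH H) (leq_maxr _ _).
Qed.

Lemma size_resolvent_le f n k : pSLD_derivation P S G0 f n -> in_res n k ->
  (size (resolvent G0 f k) <= size G0 + k * max_body_size)%N.
Proof.
move=> D; elim: k => [|k IH] Hk; first by rewrite mul0n addn0.
have Hk' : in_len n k by rewrite -in_resS.
have [Sk [HP [Esrc _]]] := D k Hk'.
have [a [p [F [r1 [r1i [[E1 _ _ _ _] [_ _ _ _ Ht]]]]]]] := is_stepP (scheduling_rule_step Sk).
have := IH (in_len_res Hk'); rewrite -Esrc E1 /= => H.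
rewrite Ht size_psubst size_padd size_pshift size_psubst mulSn addnCA addnA.
by rewrite addnC -addnA; apply: leq_add; [apply: size_body_le | apply: ltnW].
Qed.

(** * Unpruned derivations have bounded length *)

Definition unpruned (f : nat -> step) (m : nat) : Prop :=
  pSLD_derivation P S G0 f (Some m) /\ ~ pruned_by_pEVRL G0 f (Some m).

Definition dummy_clause : clause := Clause (Atom 0 [::]) [::].

Definition extensible (cs : seq clause) : Prop :=
  forall L, exists f m, [/\ unpruned f m, (L <= m)%N &
    forall t, (t < size cs)%N -> st_cl (f t) = nth dummy_clause cs t].

Lemma uniform_bound (T : Type) (B : T -> nat -> Prop) (l : seq T) :
  (forall c L L', (L <= L')%N -> B c L -> B c L') ->
  (forall c, List.In c l -> exists L, B c L) -> exists L, forall c, List.In c l -> B c L.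
Proof.
move=> Hmono; elim: l => [|c l IH] H; first by exists 0%N.
have [L1 H1] := H c (or_introl erefl).
have [L2 H2] := IH (fun d Hd => H d (or_intror Hd)).
exists (maxn L1 L2) => d [<-|Hd].
  by apply: Hmono H1; apply: leq_maxl.
by apply: Hmono (H2 d Hd); apply: leq_maxr.
Qed.

(* König's lemma: [P] is finite, so one of its clauses extends an extensible
   prefix. *)
Lemma extensible_rcons cs : extensible cs -> exists c, extensible (rcons cs c).
Proof.
move=> Hcs; apply: NNPP => Hn.
pose B c L := ~ exists f m, [/\ unpruned f m, (L <= m)%N &
  forall t, (t < size (rcons cs c))%N -> st_cl (f t) = nth dummy_clause (rcons cs c) t].
have Hmono c L L' : (L <= L')%N -> B c L -> B c L'.
  move=> HL HB [f [m [H1 H2 H3]]]; apply: HB; exists f, m; split=> //.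
  exact: leq_trans HL H2.
have HB c : List.In c P -> exists L, B c L.
  move=> _; apply: NNPP => H; apply: Hn; exists c => L.
  by apply: NNPP => H'; apply: H; exists L.
have [L0 HL0] := uniform_bound Hmono HB.
have [f [m [[Df Pf] H1 H2]]] := Hcs (maxn L0 (size cs).+1).
have Hm : (size cs < m)%N by apply: leq_trans H1; apply: leq_maxr.
have [_ [HP _]] := Df (size cs) Hm.
apply: (HL0 _ HP); exists f, m; split=> //.
- by apply: leq_trans H1; apply: leq_maxl.
- move=> t; rewrite size_rcons ltnS leq_eqVlt => /predU1P [->|Ht].
    by rewrite nth_rcons ltnn eqxx.
  by rewrite nth_rcons Ht H2.
Qed.

Definition next_clause cs := epsilon (inhabits dummy_clause) (fun c => extensible (rcons cs c)).

Fixpoint clause_prefix n :=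
  if n is n'.+1 then rcons (clause_prefix n') (next_clause (clause_prefix n')) else [::].

Definition branch_clause t := nth dummy_clause (clause_prefix t.+1) t.

Lemma size_clause_prefix n : size (clause_prefix n) = n.
Proof. by elim: n => //= n IH; rewrite size_rcons IH. Qed.

Lemma nth_clause_prefix n t : (t < n)%N -> nth dummy_clause (clause_prefix n) t = branch_clause t.
Proof.
elim: n => // n IH; rewrite ltnS leq_eqVlt => /predU1P [->//|Ht] /=.
by rewrite nth_rcons size_clause_prefix Ht IH.
Qed.

Section Branch.
Hypothesis extensible_nil : extensible [::].

Lemma extensible_clause_prefix n : extensible (clause_prefix n).
Proof.
elim: n => //= n IH; have [c Hc] := extensible_rcons IH.
exact: (epsilon_spec (inhabits dummy_clause) (fun c => extensible (rcons _ c)) (ex_intro _ c Hc)).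
Qed.
Definition dummy_step : step := Step [::] dummy_clause Var Var id [::].

Definition branch_ok (ss : seq step) (s : step) : Prop :=
  pSLD_derivation P S G0 (nth dummy_step (rcons ss s)) (Some (size ss).+1) /\
  st_cl s = branch_clause (size ss).

Definition next_step ss := epsilon (inhabits dummy_step) (branch_ok ss).

Fixpoint step_prefix n :=
  if n is n'.+1 then rcons (step_prefix n') (next_step (step_prefix n')) else [::].

Definition step_prefix_spec n : Prop :=
  [/\ size (step_prefix n) = n,
      pSLD_derivation P S G0 (nth dummy_step (step_prefix n)) (Some n) &
      forall t, (t < n)%N -> st_cl (nth dummy_step (step_prefix n) t) = branch_clause t].

Lemma nth_rcons_set_step (ss : seq step) s :
  nth dummy_step (rcons ss s) = set_step (nth dummy_step ss) (size ss) s.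
Proof.
apply: functional_extensionality => t; rewrite nth_rcons /set_step.
by case: ltngtP => // Ht; rewrite nth_default // ltnW.
Qed.

(* A long unpruned derivation along the branch has, by [same_clauses_variant], a
   resolvent at [n] that is a variant of ours; its next step can be replayed. *)
Lemma branch_ok_exists n : step_prefix_spec n -> exists s, branch_ok (step_prefix n) s.
Proof.
case=> Hsz Dd Hcl.
have [e [m [[De _] Hm He]]] := extensible_clause_prefix n.+1 n.+1.
rewrite size_clause_prefix in He.
have Hcl' t : (t < n)%N -> st_cl (e t) = st_cl (nth dummy_step (step_prefix n) t).
  by move=> Ht; rewrite He ?Hcl ?nth_clause_prefix // ltnW.
have [gm [gmi [z [gmK gmiK Hz Er _]]]] :=
  same_clauses_variant Dd De (leqnn n) (ltnW Hm : in_res (Some m) n) Hcl' (leqnn n).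
have [Se [HPe [Ese _]]] := De n Hm.
have [zi [Hzi zK ziK]] := shifting_inv Hz.
have Er' : resolvent G0 (nth dummy_step (step_prefix n)) n =
    pshift zi (psubst (ren gmi) (st_src (e n))).
  by rewrite Ese Er pshift_psubst_renK.
have [b [bi [_ Dn]]] := derivation_extend Dd Se HPe (can_inj gmiK) Hzi Er'.
exists (variant_step b bi zi (e n)); split; first by rewrite nth_rcons_set_step Hsz.
by rewrite /= He // Hsz nth_clause_prefix.
Qed.

Lemma step_prefixP n : step_prefix_spec n.
Proof.
elim: n => [|n IH]; first by split=> // j.
have [s Hs] := branch_ok_exists IH; have [Hsz _ Hcl] := IH.
have [D Ec] := epsilon_spec (inhabits dummy_step) (branch_ok (step_prefix n)) (ex_intro _ s Hs).
split.
- by rewrite /= size_rcons Hsz.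
- by move: D; rewrite /= Hsz.
- move=> t; rewrite ltnS leq_eqVlt => /predU1P [->|Ht] /=.
    by rewrite nth_rcons Hsz ltnn eqxx /next_step Ec Hsz.
  by rewrite nth_rcons Hsz Ht Hcl.
Qed.

Definition branch t := nth dummy_step (step_prefix t.+1) t.

Lemma nth_step_prefix n t : (t < n)%N -> nth dummy_step (step_prefix n) t = branch t.
Proof.
elim: n => // n IH; rewrite ltnS leq_eqVlt => /predU1P [->//|Ht] /=.
have [Hsz _ _] := step_prefixP n.
by rewrite nth_rcons Hsz Ht IH.
Qed.

Lemma branch_derivation : pSLD_derivation P S G0 branch None.
Proof.
move=> j _; have [_ D _] := step_prefixP j.+1.
have Dj : pSLD_derivation P S G0 branch (Some j.+1).
  by apply: eq_derivation D => t Ht; rewrite nth_step_prefix.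
exact: Dj j (ltnSn j).
Qed.

Lemma st_cl_branch t : st_cl (branch t) = branch_clause t.
Proof. by have [_ _ H] := step_prefixP t.+1; rewrite -(@nth_step_prefix t.+1 t) // H. Qed.

(* A pruning of the branch at [j] would also prune the unpruned derivations
   sharing its first [j] clauses. *)
Lemma branch_not_pruned : ~ pruned_by_pEVRL G0 branch None.
Proof.
move=> /prunedP [i [j [Hij _ Hp]]].
have [e [m [[De Pe] Hm He]]] := extensible_clause_prefix j j.
rewrite size_clause_prefix in He.
apply: Pe; apply: (prune_at_same_clauses branch_derivation De (k := j)) Hij (leqnn j) Hp => //.
by move=> t Ht; rewrite He // st_cl_branch nth_clause_prefix.
Qed.

End Branch.

Lemma unpruned_length_bounded :
  (forall f, pSLD_derivation P S G0 f None -> pruned_by_pEVRL G0 f None) ->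
  exists M, forall f m, unpruned f m -> (m <= M)%N.
Proof.
move=> Hinf; apply: NNPP => H.
have Hnil : extensible [::].
  move=> L; apply: NNPP => H'; apply: H; exists L => f m Hf.
  by rewrite leqNgt; apply/negP => HL; apply: H'; exists f, m; split=> //; apply: ltnW.
exact: branch_not_pruned Hnil (Hinf _ (branch_derivation Hnil)).
Qed.

(* Strong induction on the length: a pruned derivation is shortened by
   [prune_at_shorten] without changing the size of its resolvents. *)
Lemma size_resolvent_bounded M : (forall f m, unpruned f m -> (m <= M)%N) ->
  forall m f, pSLD_derivation P S G0 f (Some m) ->
  forall k, (k <= m)%N -> (size (resolvent G0 f k) <= size G0 + M * max_body_size)%N.
Proof.
move=> HM; elim/ltn_ind=> m IH f D k Hk.
case: (classic (pruned_by_pEVRL G0 f (Some m))) => [/prunedP [i [j [Hij Hj Hp]]]|Hnp].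
  case: (ltnP k j) => Hkj.
    apply: (IH k) (leqnn k); first exact: leq_trans Hkj Hj.
    exact: derivation_prefix D (leq_trans (ltnW Hkj) Hj).
  have Ek : k = (j + (k - j))%N by rewrite subnKC.
  have Hjk : (j + (k - j) <= m)%N by rewrite -Ek.
  have [g [Dg Eg]] := prune_at_shorten D Hij Hj Hp Hjk.
  rewrite Ek -Eg; apply: (IH _ _ g Dg _ (leqnn _)).
  by apply: leq_trans Hk; rewrite {2}Ek ltn_add2r.
apply: leq_trans (size_resolvent_le D Hk) _; rewrite leq_add2l leq_mul2r.
by rewrite (leq_trans Hk (HM f m (conj D Hnp))) orbT.
Qed.

End Derivations.

Theorem lemmaL5p2p1 (P : program) (G : pgoal) (S : step_set) :
  program_wf P -> pgoal_wf G -> scheduling_rule S ->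
  (forall f : nat -> step, pSLD_derivation P S G f None -> pruned_by_pEVRL G f None) ->
  exists l : nat, forall (f : nat -> step) (n : option nat),
    pSLD_derivation P S G f n ->
    forall j : nat, in_res n j -> (size (resolvent G f j) <= l)%N.
Proof.
move=> _ _ HS Hinf.
have [M HM] := unpruned_length_bounded HS Hinf.
exists (size G + M * max_body_size P)%N => f n D j Hj.
exact: (size_resolvent_bounded HS HM (derivation_prefix D Hj) (leqnn j)).
Qed.
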